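(* Let $\mathrm{A}$ be a real symmetric positive definite $d\times d$ matrix which is admissible with some parameter $\tau>0$. Then for every $a=(a_n)_{n\in\mathbb{Z}^d}\in\ell^{2}(\mathbb{Z}^{d})$, \[ \sum_{\vec{n}=(n_{1},n_{2},n_{3},n)\in\Gamma_{0}}a_{n_{1}}\overline{a_{n_{2}}}a_{n_{3}}\overline{a_{n}}=2\Big(\sum_{n\in\mathbb{Z}^{d}}|a_{n}|^{2}\Big)^{2}-\sum_{n\in\mathbb{Z}^{d}}|a_{n}|^{4}, \] where $\Gamma_{0}=\{\vec n\in(\mathbb{Z}^{d})^{4}: n_{1}-n_{2}+n_{3}-n=0,\ \Omega(\vec n)=0\}$.
   Context: $\lambda_{n}^{2}=n^{\intercal}\mathrm{A}n$ for $n\in\mathbb{Z}^d$, $|n|$ Euclidean norm; $\Omega(\vec{n})=\lambda_{n_{1}}^{2}-\lambda_{n_{2}}^{2}+\lambda_{n_{3}}^{2}-\lambda_{n}^{2}$. $\mathrm{A}$ is admissible with parameter $\tau>0$ if there is $c>0$ such that $|a^{\intercal}\mathrm{A}b|\geq c|a|^{-\tau}|b|^{-\tau}$ for all $a,b\in\mathbb{Z}^{d}\setminus\{0\}$. *)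

From mathcomp Require Import all_boot all_order all_algebra.
From mathcomp Require Import all_classical all_reals all_analysis.
From mathcomp Require Import finmap.
From mathcomp.real_closed Require Import complex.
Set Implicit Arguments. Unset Strict Implicit. Unset Printing Implicit Defensive.
Import Order.TTheory GRing.Theory Num.Theory.
Local Open Scope ring_scope.
Local Open Scope classical_set_scope.
Local Open Scope fset_scope.
Local Open Scope classical_set_scope.

Definition zvec (d : nat) := 'rV[int]_d.

Definition zr (R : realType) (d : nat) (n : zvec d) : 'rV[R]_d :=
  map_mx (fun x : int => x%:~R) n.

Definition enorm (R : realType) (d : nat) (v : 'rV[R]_d) : R :=
  Num.sqrt (\sum_(i < d) v 0 i ^+ 2).

Definition bform (R : realType) (d : nat) (A : 'M[R]_d) (a b : 'rV[R]_d) : R :=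
  (a *m A *m b^T) 0 0.

Definition sym_pos_def (R : realType) (d : nat) (A : 'M[R]_d) : Prop :=
  A^T = A /\ (forall v : 'rV[R]_d, v != 0 -> 0 < bform A v v).

Definition admissible (R : realType) (d : nat) (A : 'M[R]_d) (tau : R) : Prop :=
  exists c : R, 0 < c /\
    forall a b : zvec d, a != 0 -> b != 0 ->
      c * powR (enorm (zr R a)) (- tau) * powR (enorm (zr R b)) (- tau)
        <= `| bform A (zr R a) (zr R b) |.

Definition lam2 (R : realType) (d : nat) (A : 'M[R]_d) (n : zvec d) : R :=
  bform A (zr R n) (zr R n).

Definition Omega (R : realType) (d : nat) (A : 'M[R]_d) (n1 n2 n3 n : zvec d) : R :=
  lam2 A n1 - lam2 A n2 + lam2 A n3 - lam2 A n.

Definition quad (d : nat) := (zvec d * zvec d * zvec d * zvec d)%type.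

Definition Gamma0 (R : realType) (d : nat) (A : 'M[R]_d) : set (quad d) :=
  [set x | let: (n1, n2, n3, n) := x in
           n1 - n2 + n3 - n = 0 /\ Omega A n1 n2 n3 n = 0].

Definition cabs (R : realType) (z : R[i]) : R := Normc.normc z.

Definition in_l2 (R : realType) (d : nat) (a : zvec d -> R[i]) : Prop :=
  summable [set: zvec d] (fun n => ((cabs (a n)) ^+ 2)%:E).

(* sum_{n in Z^d} |a_n|^p (p = 2, 4), a real number when finite *)
Definition lpow_sum (R : realType) (d : nat) (a : zvec d -> R[i]) (p : nat) : R :=
  fine (\esum_(n in [set: zvec d]) ((cabs (a n)) ^+ p)%:E)%E.

(* unordered summation of a complex family over a (countable) index set S:
   the net of finite partial sums over finite subsets of S converges to L *)
Definition has_usum (T : choiceType) (R : realType) (S : set T)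
    (f : T -> R[i]) (L : R[i]) : Prop :=
  forall eps : R, 0 < eps ->
    exists F0 : {fset T}, [set` F0] `<=` S /\
      forall F : {fset T}, [set` F0] `<=` [set` F] -> [set` F] `<=` S ->
        cabs (\sum_(x <- F) f x - L) < eps.

(* Writing n1 = n2 + u and n3 = n2 + v, the momentum condition gives
   n = n2 + u + v, and then Omega = -2 u^T A v.  Admissibility makes u^T A v
   nonzero for nonzero integer vectors u, v, so Gamma_0 only contains the
   trivial quadruples (p, p, q, q) and (p, q, q, p), on which the summand is
   |a_p|^2 |a_q|^2 >= 0.  An unordered sum of nonnegative terms is the
   supremum of its finite partial sums, and splitting the pairs (p, q) into
   diagonal and off-diagonal ones gives
   sum_{Gamma_0} = sum_{p,q} + sum_{p <> q} = 2 (sum |a_n|^2)^2 - sum |a_n|^4. *)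

From mathcomp Require Import all_boot all_order all_algebra.
From mathcomp Require Import all_classical all_reals all_analysis.
From mathcomp.real_closed Require Import complex.
From mathcomp Require Import finmap.
From mathcomp Require Import ring lra.
Import Order.TTheory GRing.Theory Num.Theory.
Local Open Scope ring_scope.
Local Open Scope complex_scope.
Local Open Scope classical_set_scope.

Section bilinear_form.
Context {R : realType} {d : nat}.
Variable A : 'M[R]_d.

Lemma zrD (u v : zvec d) : zr R (u + v) = zr R u + zr R v.
Proof. by apply/matrixP => i j; rewrite !mxE intrD. Qed.

Lemma bformDl (x y z : 'rV[R]_d) : bform A (x + y) z = bform A x z + bform A y z.
Proof. by rewrite /bform !mulmxDl mxE. Qed.

Lemma bformDr (x y z : 'rV[R]_d) : bform A x (y + z) = bform A x y + bform A x z.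
Proof. by rewrite /bform linearD /= mulmxDr mxE. Qed.

Lemma bformC (x y : 'rV[R]_d) : A^T = A -> bform A x y = bform A y x.
Proof.
move=> symA; rewrite /bform.
have -> : forall M : 'M[R]_1, M 0 0 = M^T 0 0 by move=> M; rewrite mxE.
by rewrite !trmx_mul trmxK symA mulmxA.
Qed.

Lemma bform_second_difference (x u v : 'rV[R]_d) : A^T = A ->
  bform A (x + u + v) (x + u + v) - bform A (x + u) (x + u)
  - bform A (x + v) (x + v) + bform A x x = 2 * bform A u v.
Proof.
move=> symA; rewrite !(bformDl, bformDr) (bformC x u symA) (bformC x v symA) (bformC v u symA).
lra.
Qed.

Lemma OmegaE (n1 n2 n3 : zvec d) : A^T = A ->
  Omega A n1 n2 n3 (n1 - n2 + n3) = -2 * bform A (zr R (n1 - n2)) (zr R (n3 - n2)).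
Proof.
move=> symA; have := bform_second_difference (zr R n2) (zr R (n1 - n2)) (zr R (n3 - n2)) symA.
have e1 : n2 + (n1 - n2) = n1 by rewrite addrC subrK.
have e3 : n2 + (n3 - n2) = n3 by rewrite addrC subrK.
have en : n2 + (n1 - n2) + (n3 - n2) = n1 - n2 + n3 by rewrite e1 addrCA addrC.
rewrite -!zrD en e1 e3 /Omega /lam2; lra.
Qed.

End bilinear_form.

Section trivial_quadruples.
Context {T : Type}.

Definition diagonal : set (T * T) := [set k | k.1 = k.2].
Definition pair_quad (k : T * T) : T * T * T * T := (k.1, k.1, k.2, k.2).
Definition cross_quad (k : T * T) : T * T * T * T := (k.1, k.2, k.2, k.1).
(* Restricting [cross_quad] off the diagonal makes the union disjoint:
   [(p, p, p, p)] is counted once. *)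
Definition trivial_quads : set (T * T * T * T) :=
  range pair_quad `|` cross_quad @` ~` diagonal.

End trivial_quadruples.

Section admissible_resonances.
Context {R : realType} {d : nat} {A : 'M[R]_d} {tau : R}.

Lemma enorm_zr_gt0 (u : zvec d) : u != 0 -> 0 < enorm (zr R u).
Proof.
move=> u0; have [i ui0] : exists i, u 0 i != 0.
  apply/existsP; apply: contraNT u0 => /existsPn u0; apply/eqP/rowP => i.
  by have := u0 i; rewrite negbK mxE => /eqP.
rewrite /enorm sqrtr_gt0 (bigD1 i) //= ltr_pwDl ?sumr_ge0 // => [|j _].
  by rewrite exprn_even_gt0 //= /zr mxE intr_eq0.
by rewrite sqr_ge0.
Qed.

Lemma admissible_bform_neq0 (u v : zvec d) : admissible A tau ->
  u != 0 -> v != 0 -> bform A (zr R u) (zr R v) != 0.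
Proof.
move=> [c [c0 adm]] u0 v0; have := adm u v u0 v0; apply: contraTneq => ->.
by rewrite normr0 -ltNge !mulr_gt0 // powR_gt0 // enorm_zr_gt0.
Qed.

Lemma Gamma0E : A^T = A -> admissible A tau -> Gamma0 A = trivial_quads.
Proof.
move=> symA adm; apply/seteqP; split => [[[[n1 n2] n3] n] [mom res]|_ [[k _ <-]|[k _ <-]]].
- have nE : n = n1 - n2 + n3 by apply/esym/subr0_eq.
  move: res; rewrite nE OmegaE // => /eqP; rewrite mulf_eq0 oppr_eq0 pnatr_eq0 /=.
  have [-> _|n12] := eqVneq n1 n2; first by left; exists (n2, n3); rewrite // subrr add0r.
  have [-> _|n32] := eqVneq n3 n2; first by right; exists (n1, n2); [exact/eqP | rewrite subrK].
  by rewrite (negPf (admissible_bform_neq0 _ _ adm _ _)) // subr_eq0.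
- by split; rewrite /Omega /= !subrr !add0r subrr.
- by split; rewrite /Omega /= !subrK subrr.
Qed.

End admissible_resonances.

Section esum_lemmas.
Local Open Scope ereal_scope.
Context {R : realType} {T : choiceType}.

Lemma ge0_esumZl (I : set T) (c : R) (a : T -> \bar R) :
  (0 <= c)%R -> (forall t, 0 <= a t) ->
  \esum_(t in I) (c%:E * a t) = c%:E * \esum_(t in I) a t.
Proof.
move=> c0 a0; rewrite /esum -ereal_supZl //; last first.
  by apply/set0P; exists 0; exists set0 => //; [exact: fsets_set0 | rewrite fsbig_set0].
by rewrite image_comp; congr ereal_sup; apply: eq_imagel => A _; rewrite /= ge0_mule_fsumr.
Qed.

Lemma esum_diagonalID (g : T * T -> \bar R) : (forall k, 0 <= g k) ->
  \esum_(k in [set: T * T]) g k =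
  \esum_(t in [set: T]) g (t, t) + \esum_(k in ~` diagonal) g k.
Proof.
move=> g0; rewrite (esumID diagonal) // !setTI; congr (_ + _).
have -> : diagonal = (fun t => (t, t)) @` [set: T].
  by rewrite /diagonal; apply/seteqP; split => [[x y] /= ->|_ [t _ <-]] //; exists y.
by rewrite esum_image // => s t _ _ [].
Qed.

Lemma esum_trivial_quads (f : T * T * T * T -> \bar R) : (forall x, 0 <= f x) ->
  \esum_(x in trivial_quads) f x =
  \esum_(k in [set: T * T]) f (pair_quad k) + \esum_(k in ~` diagonal) f (cross_quad k).
Proof.
move=> f0; rewrite (esumID (range pair_quad)) // setUK -setDE setUKD; last first.
  move=> _ [[k _ <-] [l /eqP nl /=]]; case: l nl => l1 l2 /= nl [e1 e2 _ e4].
  by rewrite e1 e2 eqxx in nl.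
by rewrite !esum_image // => -[k1 k2] [l1 l2] _ _ /(congr1 (fun x => (x.1.1.1, x.1.2))).
Qed.

Section square_summable.
Context {b : T -> R} {S : R}.
Hypotheses (b0 : forall t, (0 <= b t)%R) (bS : \esum_(t in [set: T]) (b t)%:E = S%:E).

Lemma esum_pair_products : \esum_(k in [set: T * T]) (b k.1 * b k.2)%:E = (S * S)%:E.
Proof.
have S0 : (0 <= S)%R.
  by rewrite -lee_fin -bS; apply: esum_ge0 => t _; rewrite lee_fin.
transitivity (\esum_(i in [set: T]) \esum_(j in [set: T]) (b i * b j)%:E).
  rewrite esum_esum => [|i j _ _]; last by rewrite lee_fin mulr_ge0.
  by congr esum; apply/seteqP; split.
under eq_esum => i _.
  rewrite (eq_esum (b := fun j => (b i)%:E * (b j)%:E)) // ge0_esumZl // bS muleC.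
  over.
by rewrite /= ge0_esumZl // bS.
Qed.

Lemma esum_sqr_le : \esum_(t in [set: T]) (b t ^+ 2)%:E <= (S * S)%:E.
Proof.
rewrite -esum_pair_products esum_diagonalID => [|k]; last by rewrite lee_fin mulr_ge0.
by rewrite leeDl // esum_ge0 // => k _; rewrite lee_fin mulr_ge0.
Qed.

Lemma esum_trivial_quads_sqr {Q : R} : \esum_(t in [set: T]) (b t ^+ 2)%:E = Q%:E ->
  \esum_(x in trivial_quads) (b x.1.1.1 * b x.1.2)%:E = (2 * (S * S) - Q)%:E.
Proof.
move=> bQ; have := esum_pair_products.
rewrite esum_diagonalID => [|k]; last by rewrite lee_fin mulr_ge0.
rewrite [X in X + _]bQ addeC => offdiagE.
rewrite esum_trivial_quads => [|x]; last by rewrite lee_fin mulr_ge0.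
rewrite /= esum_pair_products -[X in _ + X](@addeK _ Q%:E) // offdiagE -!EFinB -EFinD.
by congr EFin; ring.
Qed.

End square_summable.

End esum_lemmas.

Lemma cabs_real (R : realType) (x : R) : cabs x%:C = `|x|.
Proof. by rewrite /cabs /= expr0n /= addr0 sqrtr_sqr. Qed.

Lemma esum_has_usum (R : realType) (T : choiceType) (S : set T)
    (f : T -> R) (g : T -> R[i]) (L : R) :
  (forall x, S x -> 0 <= f x) -> (forall x, S x -> g x = (f x)%:C) ->
  \esum_(x in S) (f x)%:E = L%:E -> has_usum S g L%:C.
Proof.
move=> f0 gf fL eps eps0.
have : ((L - eps)%:E < \esum_(x in S) (f x)%:E)%E by rewrite fL lte_fin gtrBl.
case/ereal_sup_gt => _ [A [finA AS] <-] ltA.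
exists (fset_set A); split; first by rewrite fset_setK.
move=> F AF FS; have sumF : (\sum_(x \in [set` F]) (f x)%:E)%E = (\sum_(x <- F) f x)%:E.
  by rewrite -fsbig_seq // sumEFin.
have leL : \sum_(x <- F) f x <= L.
  rewrite -lee_fin -sumF -fL; apply: ereal_sup_ubound.
  by exists [set` F] => //; split => //; exact: finite_fset.
have gtL : L - eps < \sum_(x <- F) f x.
  rewrite -lte_fin -sumF (lt_le_trans ltA) // lee_fsum_nneg_subset //.
  - by apply/subsetP; rewrite -(fset_setK finA).
  - by move=> x /[!inE] /andP[_ /set_mem/FS/f0]; rewrite lee_fin.
rewrite big_seq (eq_bigr (fun x => (f x)%:C)) => [|x /FS/gf //].
rewrite -big_seq -rmorph_sum -rmorphB cabs_real ler0_norm ?subr_le0 //.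
by rewrite opprB ltrBlDr addrC -ltrBlDr.
Qed.

Section quartic_terms.
Context {R : realType} {T : Type}.
Variable a : T -> R[i].

Lemma mulc_conj (z : R[i]) : z * z^* = (cabs z ^+ 2)%:C.
Proof. by rewrite -sqr_normc rmorphXn. Qed.

Definition quartic (x : T * T * T * T) : R[i] :=
  let: (n1, n2, n3, n) := x in a n1 * (a n2)^* * a n3 * (a n)^*.

Lemma quartic_trivial_quads x :
  trivial_quads x -> quartic x = (cabs (a x.1.1.1) ^+ 2 * cabs (a x.1.2) ^+ 2)%:C.
Proof.
case=> -[k _ <-]; rewrite /quartic /=;
  (transitivity ((a k.1 * (a k.1)^*) * (a k.2 * (a k.2)^*)); first by ring);
  by rewrite !mulc_conj -rmorphM.
Qed.

End quartic_terms.

Section square_summable_sequences.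
Context {R : realType} {d : nat} {a : zvec d -> R[i]}.
Hypothesis a2 : in_l2 a.

Lemma in_l2_esum2 :
  \esum_(n in [set: zvec d]) (cabs (a n) ^+ 2)%:E = (lpow_sum a 2)%:E.
Proof.
have absE : \esum_(n in [set: zvec d]) (cabs (a n) ^+ 2)%:E =
            \esum_(n in [set: zvec d]) `|(cabs (a n) ^+ 2)%:E|%E.
  by apply: eq_esum => n _; rewrite abse_EFin ger0_norm ?sqr_ge0.
rewrite /lpow_sum fineK // ge0_fin_numE; first by rewrite absE.
by apply: esum_ge0 => n _; rewrite lee_fin sqr_ge0.
Qed.

(* [lpow_sum] takes [fine] of an extended sum, so the finiteness of
   [sum |a_n|^4] has to be established first: it is at most [(sum |a_n|^2)^2]. *)
Lemma in_l2_esum4 :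
  \esum_(n in [set: zvec d]) ((cabs (a n) ^+ 2) ^+ 2)%:E = (lpow_sum a 4)%:E.
Proof.
have le4 := esum_sqr_le (fun n => sqr_ge0 (cabs (a n))) in_l2_esum2.
rewrite /lpow_sum [X in fine X](_ : _ = \esum_(n in [set: zvec d]) ((cabs (a n) ^+ 2) ^+ 2)%:E).
  rewrite fineK // ge0_fin_numE ?(le_lt_trans le4) ?ltry //.
  by apply: esum_ge0 => n _; rewrite lee_fin sqr_ge0.
by apply: eq_esum => n _; rewrite -exprM.
Qed.

End square_summable_sequences.

Theorem lemma2p6 (R : realType) (d : nat) (A : 'M[R]_d) (tau : R) :
  sym_pos_def A -> 0 < tau -> admissible A tau ->
  forall a : zvec d -> R[i], in_l2 a ->
    has_usum (Gamma0 A)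
      (fun x : quad d => let: (n1, n2, n3, n) := x in
         a n1 * (a n2)^* * a n3 * (a n)^*)
      ((2 * (lpow_sum a 2) ^+ 2 - lpow_sum a 4)%:C).
Proof.
move=> [symA _] _ adm a a2; rewrite (Gamma0E symA adm).
pose b n := cabs (a n) ^+ 2; have b0 n : 0 <= b n by apply: sqr_ge0.
apply: (@esum_has_usum _ _ _ (fun x => b x.1.1.1 * b x.1.2) (quartic a)).
- by move=> x _; apply: mulr_ge0.
- exact: quartic_trivial_quads.
- by rewrite (esum_trivial_quads_sqr b0 (in_l2_esum2 a2) (in_l2_esum4 a2)) expr2.
Qed.
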